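(* In the multi-period single-sector model described in the context, for $n+m \le N_{t_k}$, \begin{displaymath} \mathbb{P}\left(D_{t_{k+1}} - D_{t_k} = n \mid I_{t_{k}} = m; N_{t_k}\right) = \tilde{P}\left(n; N_{t_k} - m, \eta_S + m \eta_{FS}, \eta_{FS}, \eta_{F}\right), \end{displaymath} where $\tilde{P}(n;N,\eta_S,\eta_{FS},\eta_F) := \mathbb{P}\left(\sum_{i=1}^N X_i=n\right) = \frac{1}{Z_1}\binom{N}{n}\left[e^{n\eta_F} + e^{\eta_S + n\eta_F + n\eta_{FS}}\right]$ is the loss distribution of the one-period single-sector model with $N$ firms and parameters $(\eta_S,\eta_{FS},\eta_F)$, and $Z_{N,\eta_S,\eta_{FS},\eta_F}:=Z_1 = (1+e^{\eta_F})^N + e^{\eta_S}(1+e^{\eta_F+\eta_{FS}})^N$ is its normalization constant.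
   Context: One-period single-sector model: for $N$ firms with default indicators $X_1,\dots,X_N\in\{0,1\}$ and real parameters $\eta_S,\eta_{FS},\eta_F$ (obtained by summing out one binary sector node connected to all firms in an Ising-type graphical model), $\mathbb{P}(X_1=x_1,\dots,X_N=x_N) = \frac{1}{Z_1}\left(e^{\eta_F\sum_i x_i} + e^{\eta_S + (\eta_{FS}+\eta_F)\sum_i x_i}\right)$ with $Z_1=(1+e^{\eta_F})^N + e^{\eta_S}(1+e^{\eta_F+\eta_{FS}})^N$. Multi-period construction: start with a single-sector graph with $N$ firms at payment dates $t_0=0<t_1<\dots$. Let $D_{t_k}$ be the number of firms defaulted up to $t_k$ and $N_{t_k}$ the number of firms remaining in the system, with $D_0=0$, $N_0=N$. At the beginning of each period each defaulted node still in the system is removed independently with probability $p_R$. The number of firms currently in default and still in the system is $I_{t_k} = D_{t_k} + N_{t_k} - N$. The number of additional defaults in $(t_k,t_{k+1})$ is defined by conditioning the one-period single-sector distribution on $N_{t_k}$ firms, with the $m$ in-default firms labelled $1,\dots,m$: $\mathbb{P}(D_{t_{k+1}} - D_{t_k} = n \mid I_{t_k} = m; N_{t_k}) := \sum_{i_1,\dots,i_n \in \{m+1,\dots,N_{t_k}\}} \mathbb{P}(X_{i_1}=\dots=X_{i_n}=1, X_{i_{n+1}}=\dots=X_{i_{N_{t_k}}}=0 \mid X_1=\dots=X_m=1)$, for $n+m\le N_{t_k}$ (the sum running over choices of the $n$ newly defaulting firms among the $N_{t_k}-m$ non-defaulted ones, the remaining ones surviving). *)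

From HB Require Import structures.
From mathcomp Require Import all_boot all_order all_algebra.
From mathcomp Require Import reals.
From mathcomp Require Import sequences exp.
Set Implicit Arguments. Unset Strict Implicit. Unset Printing Implicit Defensive.
Import Order.TTheory GRing.Theory Num.Theory.
Local Open Scope ring_scope.

Section OnePeriod.
Variable R : realType.

Definition Z1 (N : nat) (eS eFS eF : R) : R :=
  (1 + expR eF) ^+ N + expR eS * (1 + expR (eF + eFS)) ^+ N.

Definition ndef (N : nat) (x : {ffun 'I_N -> bool}) : nat := \sum_(i < N) x i.

Definition pmf (N : nat) (eS eFS eF : R) (x : {ffun 'I_N -> bool}) : R :=
  (expR (eF * (ndef x)%:R) + expR (eS + (eFS + eF) * (ndef x)%:R)) / Z1 N eS eFS eF.

Definition prob (N : nat) (eS eFS eF : R) (A : pred {ffun 'I_N -> bool}) : R :=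
  \sum_(x | A x) pmf eS eFS eF x.

Definition cprob (N : nat) (eS eFS eF : R) (A B : pred {ffun 'I_N -> bool}) : R :=
  prob eS eFS eF [pred x | A x && B x] / prob eS eFS eF B.

Definition Ptilde (n N : nat) (eS eFS eF : R) : R :=
  ('C(N, n))%:R * (expR (n%:R * eF) + expR (eS + n%:R * eF + n%:R * eFS))
  / Z1 N eS eFS eF.

(* P(D_{t_{k+1}} - D_{t_k} = n | I_{t_k} = m; N_{t_k} = Nt):
   firms are indexed by 'I_Nt; the m in-default firms are those with index < m
   (the paper's labels 1..m). Sum over sets S of n non-defaulted firms (index >= m)
   of P(X_i = 1 for i in S, X_i = 0 for the other non-defaulted i | X_i = 1 for i < m). *)
Definition trans_prob (Nt m n : nat) (eS eFS eF : R) : R :=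
  \sum_(S : {set 'I_Nt} | [forall i, (i \in S) ==> (m <= i)%N] && (#|S| == n))
    cprob eS eFS eF
      [pred x : {ffun 'I_Nt -> bool} | [forall i : 'I_Nt, (m <= i)%N ==> (x i == (i \in S))]]
      [pred x : {ffun 'I_Nt -> bool} | [forall i : 'I_Nt, (i < m)%N ==> x i]].

End OnePeriod.

From HB Require Import structures.
From mathcomp Require Import all_boot all_order all_algebra.
From mathcomp Require Import reals.
From mathcomp Require Import sequences exp.
From mathcomp Require Import ring.
Set Implicit Arguments. Unset Strict Implicit. Unset Printing Implicit Defensive.
Import Order.TTheory GRing.Theory Num.Theory.
Local Open Scope ring_scope.

(* The law of a configuration depends only on its number k of defaults, through the
   weight e^(k eF) + e^(eS + k (eF + eFS)). Summed over the configurations in which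
   m given firms are in default, these weights give e^(m eF) times the normalization
   constant of the model with N - m firms and sector parameter eS + m eFS; and a
   configuration with m + n defaults has weight e^(m eF) times the weight of n
   defaults in that same shifted model. So each of the C(N - m, n) terms of the
   transition probability is the shifted one-period probability of a given set of
   n defaults, the factor e^(m eF) cancelling. *)

Lemma card_ord_ltn (N m : nat) : (m <= N)%N -> #|[set i : 'I_N | (i < m)%N]| = m.
Proof.
move=> le_mN; have widen_inj : injective (widen_ord le_mN).
  by move=> i j /(congr1 val) /= /val_inj.
rewrite -[in RHS](card_ord m) -cardsT -(card_imset _ widen_inj).
apply: eq_card => i; rewrite inE; apply/idP/imsetP => [lt_im | [j _ ->]].
  by exists (Ordinal lt_im) => //; apply: val_inj.
exact: (ltn_ord j).
Qed.

Lemma card_ord_geq (N m : nat) : (m <= N)%N -> #|[set i : 'I_N | (m <= i)%N]| = (N - m)%N.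
Proof.
move=> le_mN; have := cardsC [set i : 'I_N | (i < m)%N].
have -> : ~: [set i : 'I_N | (i < m)%N] = [set i : 'I_N | (m <= i)%N].
  by apply/setP => i; rewrite !inE -leqNgt.
rewrite card_ord_ltn // => /(congr1 (subn^~ m)); rewrite addKn => ->.
by congr (_ - _)%N; exact: card_ord.
Qed.

Lemma ndef_card (N : nat) (x : {ffun 'I_N -> bool}) : ndef x = #|[set i | x i]|.
Proof. by rewrite /ndef -sum1dep_card [RHS]big_mkcond; apply: eq_bigr => i _; case: (x i). Qed.

Lemma sum_forced_expr (R : comPzSemiRingType) (N : nat) (P : pred 'I_N) (c : R) :
  \sum_(x : {ffun 'I_N -> bool} | [forall i, P i ==> x i]) c ^+ ndef x
  = c ^+ #|P| * (1 + c) ^+ #|[predC P]|.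
Proof.
pose F (i : 'I_N) (b : bool) : R := if b then c else if P i then 0 else 1.
transitivity (\sum_(x : {ffun 'I_N -> bool}) \prod_i F i (x i)).
  rewrite big_mkcond; apply: eq_bigr => x _; case: ifP => [/forallP forced | ].
    rewrite /ndef expr_sum; apply: eq_bigr => i _ /=.
    by have := forced i; rewrite /F; case: (x i); case: (P i).
  move/negbT/forallPn => [i]; rewrite negb_imply => /andP[Pi not_xi].
  by rewrite (bigD1 i) //= /F (negbTE not_xi) Pi mul0r.
rewrite -(bigA_distr_bigA F) (eq_bigr (fun i => if P i then c else 1 + c)); last first.
  by move=> i _; rewrite big_bool /F /=; case: (P i); rewrite ?addr0 // addrC.
by rewrite big_if /= !prodr_const.
Qed.

Lemma card_draws_geq (N m n : nat) : (m <= N)%N ->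
  #|[pred S : {set 'I_N} | [forall i, (i \in S) ==> (m <= i)%N] && (#|S| == n)]|
  = 'C(N - m, n).
Proof.
move=> le_mN; rewrite -card_ord_geq // -cards_draws; apply: eq_card => S.
rewrite !inE; congr (_ && _); apply/forallP/subsetP => [S_geq i | S_geq i].
  by move/(implyP (S_geq i)); rewrite inE.
by apply/implyP => /S_geq; rewrite inE.
Qed.

Definition default_config (N m : nat) (S : {set 'I_N}) : {ffun 'I_N -> bool} :=
  [ffun i : 'I_N => (i < m)%N || (i \in S)].

Lemma ndef_default_config (N m : nat) (S : {set 'I_N}) :
  (m <= N)%N -> [forall i : 'I_N, (i \in S) ==> (m <= i)%N] ->
  ndef (default_config m S) = (m + #|S|)%N.
Proof.
move=> le_mN /forallP S_geq; rewrite ndef_card -[in RHS](card_ord_ltn le_mN) -cardsUI.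
have -> : [set i : 'I_N | (i < m)%N] :&: S = set0.
  apply/setP => i; rewrite !inE.
  by apply/negbTE/andP => -[lt_im /(implyP (S_geq i))]; rewrite leqNgt lt_im.
have -> : [set i | default_config m S i] = [set i : 'I_N | (i < m)%N] :|: S.
  by apply/setP => i; rewrite !inE ffunE.
by rewrite cards0 addn0.
Qed.

Lemma forall_eq_default_config (N m : nat) (S : {set 'I_N}) :
  [forall i : 'I_N, (i \in S) ==> (m <= i)%N] -> forall x : {ffun 'I_N -> bool},
  [forall i : 'I_N, (m <= i)%N ==> (x i == (i \in S))] && [forall i : 'I_N, (i < m)%N ==> x i]
  = (x == default_config m S).
Proof.
move=> /forallP S_geq x; apply/andP/eqP => [[/forallP x_high /forallP x_low] | ->].
  apply/ffunP => i; rewrite ffunE; case: (ltnP i m) => [lt_im | le_mi] /=.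
    exact: implyP (x_low i) lt_im.
  exact/eqP/(implyP (x_high i) le_mi).
split; apply/forallP => i; apply/implyP => hi; rewrite ffunE.
  by rewrite ltnNge hi.
by rewrite hi.
Qed.

Section SingleSector.
Variable R : realType.
Implicit Types (eS eFS eF : R) (N m n k : nat).

Definition weight eS eFS eF k : R := expR (eF * k%:R) + expR (eS + (eFS + eF) * k%:R).

Lemma Z1_gt0 N eS eFS eF : 0 < Z1 N eS eFS eF.
Proof. by rewrite /Z1 addr_gt0 ?mulr_gt0 ?exprn_gt0 ?addr_gt0 ?expR_gt0. Qed.

Lemma weightE eS eFS eF k :
  weight eS eFS eF k = expR eF ^+ k + expR eS * expR (eF + eFS) ^+ k.
Proof. by rewrite /weight expRD expRM_natr (addrC eFS) expRM_natr. Qed.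

Lemma weight_addn eS eFS eF m n :
  weight eS eFS eF (m + n) = expR eF ^+ m * weight (eS + m%:R * eFS) eFS eF n.
Proof. by rewrite !weightE (expRD eS) expRM_natl (expRD eF) !exprD !exprMn; ring. Qed.

Lemma Ptilde_weight n N eS eFS eF :
  Ptilde n N eS eFS eF = 'C(N, n)%:R * weight eS eFS eF n / Z1 N eS eFS eF.
Proof.
rewrite /Ptilde /weight; congr (_ * (expR _ + expR _) / _); first exact: mulrC.
by ring.
Qed.

Lemma sum_weight_forced N m eS eFS eF : (m <= N)%N ->
  \sum_(x : {ffun 'I_N -> bool} | [forall i : 'I_N, (i < m)%N ==> x i])
     weight eS eFS eF (ndef x)
  = expR eF ^+ m * Z1 (N - m) (eS + m%:R * eFS) eFS eF.
Proof.
move=> le_mN; under eq_bigr do rewrite weightE.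
pose low := [pred i : 'I_N | (i < m)%N].
rewrite big_split -big_distrr /= !(sum_forced_expr low).
have -> : #|low| = m by rewrite -cardsE card_ord_ltn.
have -> : #|[predC low]| = (N - m)%N.
  by rewrite -cardsE -(card_ord_geq le_mN); apply: eq_card => i; rewrite !inE -leqNgt.
by rewrite /Z1 (expRD eS) expRM_natl (expRD eF) !exprMn; ring.
Qed.

Lemma pmf_weight N eS eFS eF (x : {ffun 'I_N -> bool}) :
  pmf eS eFS eF x = weight eS eFS eF (ndef x) / Z1 N eS eFS eF.
Proof. by []. Qed.

Lemma cprob_pred1 N eS eFS eF (A B : pred {ffun 'I_N -> bool}) (x0 : {ffun 'I_N -> bool}) :
  (forall x, A x && B x = (x == x0)) ->
  cprob eS eFS eF A B
  = weight eS eFS eF (ndef x0) / \sum_(x | B x) weight eS eFS eF (ndef x).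
Proof.
move=> AB_x0; rewrite /cprob /prob (big_pred1 x0) // pmf_weight.
under eq_bigr do rewrite pmf_weight.
by rewrite -big_distrl /= invf_div mulrA divfK // lt0r_neq0 // Z1_gt0.
Qed.

End SingleSector.

Theorem proposition3 (R : realType) (eS eFS eF : R) (Nt m n : nat) :
  (n + m <= Nt)%N ->
  trans_prob Nt m n eS eFS eF = Ptilde n (Nt - m) (eS + m%:R * eFS) eFS eF.
Proof.
move=> le_nm_N; have le_mN : (m <= Nt)%N := leq_trans (leq_addl n m) le_nm_N.
set Z' := Z1 (Nt - m) (eS + m%:R * eFS) eFS eF.
rewrite /trans_prob (eq_bigr (fun=> weight eS eFS eF (m + n) / (expR eF ^+ m * Z'))).
  rewrite sumr_const card_draws_geq // weight_addn Ptilde_weight.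
  rewrite -[_ *+ 'C(_, _)]mulr_natl -mulf_div divff ?mul1r ?mulrA //.
  by rewrite expf_neq0 // lt0r_neq0 // expR_gt0.
move=> S /andP[S_geq /eqP card_S].
rewrite (cprob_pred1 _ _ _ (forall_eq_default_config S_geq)) sum_weight_forced //.
by rewrite ndef_default_config // card_S.
Qed.
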